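(* Let $k\ge 3$ and let $G=G_1\ast G_2\ast\dots\ast G_k$ be a free product of freely indecomposable groups such that $G_i$ is not infinite cyclic for $i\ge 3$. Let $p\colon G\to G_1\ast G_2$ be the projection that is the identity on $G_1$ and $G_2$ and trivial on $G_3,\dots,G_k$. Then $\ker(p)$ is invariant under every automorphism in $\mathrm{Aut}^0(G)$.
   Context: A group is freely indecomposable if non-trivial and not a free product of two non-trivial groups. For a free product $G=G_1\ast\dots\ast G_k$, $\mathrm{Aut}^0(G)$ is the subgroup of $\mathrm{Aut}(G)$ generated by: factor automorphisms (apply an automorphism of one factor $G_i$ and fix all other factors); transvections (if $G_i=\langle v\rangle$ is infinite cyclic and $w\in G_j$ with $j\ne i$, send $v\mapsto vw$ or $v\mapsto wv$ and fix all other factors); partial conjugations (for $i\neq j$ and $g\in G_j$, conjugate every element of $G_i$ by $g$ and fix all other factors). *)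

From Stdlib Require Import ZArith.
From mathcomp Require Import all_boot.
Set Implicit Arguments. Unset Strict Implicit. Unset Printing Implicit Defensive.

Record group := Group {
  carrier :> Type;
  gmul : carrier -> carrier -> carrier;
  gone : carrier;
  ginv : carrier -> carrier;
  gmulA : forall x y z, gmul x (gmul y z) = gmul (gmul x y) z;
  gmul1 : forall x, gmul gone x = x;
  gmulV : forall x, gmul (ginv x) x = gone }.
Arguments gmul {g}. Arguments gone {g}. Arguments ginv {g}.

Section Groups.
Variable G : group.

Definition subgroup (S : G -> Prop) : Prop :=
  S gone /\ (forall x y, S x -> S y -> S (gmul x y)) /\ (forall x, S x -> S (ginv x)).

Definition nontrivial_sub (S : G -> Prop) : Prop := exists x, S x /\ x <> gone.

Fixpoint npow (v : G) (n : nat) : G :=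
  match n with O => gone | S m => gmul v (npow v m) end.
Definition zpow (v : G) (z : Z) : G :=
  match z with
  | Z0 => gone
  | Zpos p => npow v (Pos.to_nat p)
  | Zneg p => ginv (npow v (Pos.to_nat p))
  end.

Definition inf_cyclic_gen (S : G -> Prop) (v : G) : Prop :=
  (forall x, S x <-> exists n : Z, x = zpow v n) /\
  (forall n : Z, zpow v n = gone -> n = 0%Z).
Definition infinite_cyclic (S : G -> Prop) : Prop := exists v, inf_cyclic_gen S v.

Fixpoint word_eval {I : Type} (w : list (I * G)) : G :=
  match w with nil => gone | cons a t => gmul a.2 (word_eval t) end.
Fixpoint letters_ok {I : Type} (H : I -> G -> Prop) (w : list (I * G)) : Prop :=
  match w with nil => True | cons a t => (H a.1 a.2 /\ a.2 <> gone) /\ letters_ok H t end.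
Fixpoint alternating {I : Type} (w : list (I * G)) : Prop :=
  match w with
  | cons a ((cons b _) as t) => a.1 <> b.1 /\ alternating t
  | _ => True
  end.
Definition reduced {I : Type} (H : I -> G -> Prop) (w : list (I * G)) : Prop :=
  letters_ok H w /\ alternating w.

(* The subgroup S of G is the (internal) free product of the subgroups H i,
   i : I : every element of S is the value of a unique reduced word. *)
Definition free_product_on {I : Type} (S : G -> Prop) (H : I -> G -> Prop) : Prop :=
  (forall i, subgroup (H i)) /\ (forall i x, H i x -> S x) /\
  (forall x, S x -> exists w, reduced H w /\ word_eval w = x) /\
  (forall w1 w2, reduced H w1 -> reduced H w2 -> word_eval w1 = word_eval w2 -> w1 = w2).

Definition free_product {I : Type} (H : I -> G -> Prop) : Prop :=
  free_product_on (fun _ => True) H.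

Definition freely_indecomposable (S : G -> Prop) : Prop :=
  subgroup S /\ nontrivial_sub S /\
  ~ (exists A B : G -> Prop, nontrivial_sub A /\ nontrivial_sub B /\
       free_product_on S (fun b : bool => if b then A else B)).

Definition hom (Q : group) (f : G -> Q) : Prop := forall x y, f (gmul x y) = gmul (f x) (f y).

Definition automorphism (f : G -> G) : Prop :=
  hom f /\ (forall x y, f x = f y -> x = y) /\ (forall y, exists x, f x = y).

Definition factor_aut {I : Type} (H : I -> G -> Prop) (phi : G -> G) : Prop :=
  automorphism phi /\ exists i,
    (forall x, H i x -> H i (phi x)) /\
    (forall y, H i y -> exists x, H i x /\ phi x = y) /\
    (forall j x, j <> i -> H j x -> phi x = x).

Definition transvection {I : Type} (H : I -> G -> Prop) (phi : G -> G) : Prop :=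
  automorphism phi /\ exists i j v w,
    i <> j /\ inf_cyclic_gen (H i) v /\ H j w /\
    (phi v = gmul v w \/ phi v = gmul w v) /\
    (forall l x, l <> i -> H l x -> phi x = x).

Definition partial_conj {I : Type} (H : I -> G -> Prop) (phi : G -> G) : Prop :=
  automorphism phi /\ exists i j g,
    i <> j /\ H j g /\
    (forall x, H i x -> phi x = gmul (ginv g) (gmul x g)) /\
    (forall l x, l <> i -> H l x -> phi x = x).

Inductive generated (Gen : (G -> G) -> Prop) : (G -> G) -> Prop :=
  | gen_id : generated Gen (fun x => x)
  | gen_base f : Gen f -> generated Gen f
  | gen_comp f g : generated Gen f -> generated Gen g -> generated Gen (fun x => f (g x))
  | gen_inv f g : generated Gen f -> (forall x, g (f x) = x /\ f (g x) = x) -> generated Gen g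
  | gen_ext f g : generated Gen f -> (forall x, f x = g x) -> generated Gen g.

Definition Aut0 {I : Type} (H : I -> G -> Prop) : (G -> G) -> Prop :=
  generated (fun phi => factor_aut H phi \/ transvection H phi \/ partial_conj H phi).

End Groups.
Arguments hom {G Q}.

From Stdlib Require Import Classical.
From Stdlib Require List.
From mathcomp Require Import all_boot.
Set Implicit Arguments. Unset Strict Implicit.

(* Let N be the normal closure of the factors H_3, ..., H_k of
   G = H_1 * ... * H_k.  The proof has two independent halves.

   1. ker p = N.  Clearly p kills N.  Conversely, write x as a reduced word;
      deleting its letters from H_3, ..., H_k changes x only by a left
      factor in N, and the remaining word reduces to a reduced word u over
      H_1, H_2.  Since p embeds H_1, H_2 into the factors Q1, Q2 of
      Q1 * Q2, the image of u is reduced in Q1 * Q2; if p x = 1 uniqueness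
      of normal forms forces u to be empty, so x lies in N
      (kernel_is_closure, for any free products and any set of killed
      factors).

   2. Aut^0(G) preserves N.  An automorphism preserves a normal closure as
      soon as each generator is sent into it and is hit from it
      (aut_preserves).  Factor automorphisms and partial conjugations act
      on each factor by an automorphism of it, a conjugation, or trivially;
      transvections only move infinite cyclic factors, hence fix the H_i,
      i >= 3 (Aut0_preserves). *)

(* The group record only postulates left identity and left inverses; the
   right-handed laws and the usual inverse identities follow. *)
Section GroupFacts.
Variable G : group.
Implicit Types x y : G.

Lemma gmulrV x : gmul x (ginv x) = gone.
Proof.
rewrite -[gmul x (ginv x)]gmul1 -[X in gmul X (gmul x _)](gmulV (ginv x)).
by rewrite -gmulA (gmulA (ginv x) x (ginv x)) gmulV gmul1 gmulV.
Qed.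

Lemma gmulr1 x : gmul x gone = x.
Proof. by rewrite -(gmulV x) gmulA gmulrV gmul1. Qed.

Lemma ginv_uniq x y : gmul x y = gone -> x = ginv y.
Proof. by move=> E; rewrite -(gmulr1 x) -(gmulrV y) gmulA E gmul1. Qed.

Lemma ginvK x : ginv (ginv x) = x.
Proof. by symmetry; apply: ginv_uniq; exact: gmulrV. Qed.

Lemma ginvM x y : ginv (gmul x y) = gmul (ginv y) (ginv x).
Proof.
symmetry; apply: ginv_uniq.
by rewrite -gmulA (gmulA (ginv x) x y) gmulV gmul1 gmulV.
Qed.

Lemma ginv1 : ginv (@gone G) = gone.
Proof. by symmetry; apply: ginv_uniq; exact: gmul1. Qed.

End GroupFacts.

Section Homomorphisms.
Variables (G Q : group) (f : G -> Q).
Hypothesis hf : hom f.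

Lemma hom1 : f gone = gone.
Proof.
have E : gmul (f gone) (f gone) = f gone by rewrite -hf gmul1.
by rewrite -(gmul1 (f gone)) -{1}(gmulV (f gone)) -gmulA E gmulV.
Qed.

Lemma homV x : f (ginv x) = ginv (f x).
Proof. by apply: ginv_uniq; rewrite -hf gmulV hom1. Qed.

End Homomorphisms.

Section NormalClosure.
Variable G : group.
Implicit Types (S : G -> Prop) (g h x y : G).

Inductive normal_closure S : G -> Prop :=
| ncl_gen g h : S h -> normal_closure S (gmul g (gmul h (ginv g)))
| ncl_one : normal_closure S gone
| ncl_mul x y : normal_closure S x -> normal_closure S y -> normal_closure S (gmul x y)
| ncl_inv x : normal_closure S x -> normal_closure S (ginv x).

Lemma ncl_base S h : S h -> normal_closure S h.
Proof. by move=> Sh; have := ncl_gen gone Sh; rewrite ginv1 gmulr1 gmul1. Qed.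

Lemma ncl_conj S g x :
  normal_closure S x -> normal_closure S (gmul g (gmul x (ginv g))).
Proof.
elim=> {x} [g' h Sh | | x y _ Nx _ Ny | x _ Nx].
- rewrite (_ : gmul g _ = gmul (gmul g g') (gmul h (ginv (gmul g g')))).
    exact: ncl_gen.
  by rewrite ginvM !gmulA.
- by rewrite gmul1 gmulrV; exact: ncl_one.
- rewrite (_ : gmul g _ = gmul (gmul g (gmul x (ginv g))) (gmul g (gmul y (ginv g)))).
    exact: ncl_mul.
  by rewrite !gmulA -(gmulA _ (ginv g) g) gmulV gmulr1.
- rewrite (_ : gmul g _ = ginv (gmul g (gmul x (ginv g)))); first exact: ncl_inv.
  by rewrite !ginvM ginvK gmulA.
Qed.

End NormalClosure.

Lemma ncl_image (G Q : group) (S : G -> Prop) (T : Q -> Prop) (f : G -> Q) :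
  hom f -> (forall h, S h -> normal_closure T (f h)) ->
  forall x, normal_closure S x -> normal_closure T (f x).
Proof.
move=> hf fS x; elim=> {x} [g h /fS Th | | x y _ Tx _ Ty | x _ Tx].
- by rewrite !hf homV //; exact: ncl_conj.
- by rewrite hom1 //; exact: ncl_one.
- by rewrite hf; exact: ncl_mul.
- by rewrite homV //; exact: ncl_inv.
Qed.

Lemma ncl_kernel (G Q : group) (S : G -> Prop) (f : G -> Q) :
  hom f -> (forall h, S h -> f h = gone) ->
  forall x, normal_closure S x -> f x = gone.
Proof.
move=> hf fS x; elim=> {x} [g h /fS fh | | x y _ fx _ fy | x _ fx].
- by rewrite !hf fh gmul1 homV // gmulrV.
- exact: hom1.
- by rewrite hf fx fy gmul1.
- by rewrite homV // fx ginv1.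
Qed.

Section Invariance.
Variables (G : group) (S : G -> Prop).

Definition preserves (phi : G -> G) : Prop :=
  forall x, normal_closure S x <-> normal_closure S (phi x).

(* If every element of S has a phi-preimage in the normal closure, then so
   does every element of the closure; injectivity turns this into the
   reverse inclusion. *)
Lemma ncl_preimage phi :
  automorphism phi ->
  (forall h, S h -> exists n, normal_closure S n /\ phi n = h) ->
  forall x, normal_closure S (phi x) -> normal_closure S x.
Proof.
move=> [hphi [inj sur]] liftS.
have lift y : normal_closure S y -> exists n, normal_closure S n /\ phi n = y.
  elim=> {y} [g h /liftS [n [Nn <-]] | | x y _ [n [Nn <-]] _ [m [Nm <-]]
             | x _ [n [Nn <-]]].
  - have [g0 <-] := sur g.
    exists (gmul g0 (gmul n (ginv g0))); split; first exact: ncl_conj.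
    by rewrite !hphi homV.
  - by exists gone; split; [exact: ncl_one | exact: hom1].
  - by exists (gmul n m); split; [exact: ncl_mul | rewrite hphi].
  - by exists (ginv n); split; [exact: ncl_inv | rewrite homV].
by move=> x /lift [n [Nn /inj <-]].
Qed.

Lemma aut_preserves phi :
  automorphism phi ->
  (forall h, S h -> normal_closure S (phi h) /\
                    exists n, normal_closure S n /\ phi n = h) ->
  preserves phi.
Proof.
move=> aut hS x; split; last exact: ncl_preimage (fun h Sh => (hS h Sh).2) x.
by apply: ncl_image; [exact: aut.1 | move=> h /hS []].
Qed.

Lemma fixed_in_closure phi h : S h -> phi h = h ->
  normal_closure S (phi h) /\ exists n, normal_closure S n /\ phi n = h.
Proof.
move=> Sh fixh; rewrite fixh; split; first exact: ncl_base.
by exists h; split; first exact: ncl_base.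
Qed.

Lemma generated_preserves (Gen : (G -> G) -> Prop) :
  (forall f, Gen f -> preserves f) -> forall f, generated Gen f -> preserves f.
Proof.
move=> hGen f; elim=> {f} [// | f /hGen // | f g _ Pf _ Pg x | f g _ Pf fg x
  | f g _ Pf E x].
- by rewrite Pg Pf.
- by rewrite (Pf (g x)) (fg x).2.
- by rewrite -E.
Qed.

End Invariance.

Section Aut0Invariance.
Variables (I : Type) (G : group) (H : I -> G -> Prop) (D : I -> Prop).

Definition factors_in : G -> Prop := fun h => exists i, D i /\ H i h.

Let S := factors_in.

(* A factor automorphism maps its own factor onto itself and fixes the rest. *)
Lemma factor_aut_preserves phi : factor_aut H phi -> preserves S phi.
Proof.
move=> [aut [i [into [onto fix_other]]]].
apply: aut_preserves => // h [l [Dl Hh]].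
have [eli | nli] := classic (l = i); last first.
  by apply: fixed_in_closure; [exists l | exact: fix_other Hh].
subst l; split; first by apply: ncl_base; exists i; split; last exact: into.
have [y [Hy <-]] := onto h Hh.
by exists y; split; first by apply: ncl_base; exists i.
Qed.

(* A transvection moves only an infinite cyclic factor, hence fixes every
   factor indexed by D when these are not infinite cyclic. *)
Lemma transvection_preserves phi :
  (forall i, D i -> ~ infinite_cyclic (H i)) ->
  transvection H phi -> preserves S phi.
Proof.
move=> not_cyc [aut [i [j [v [w [_ [gen_v [_ [_ fix_other]]]]]]]]].
apply: aut_preserves => // h [l [Dl Hh]].
apply: fixed_in_closure; first by exists l.
apply: fix_other Hh => eli; apply: (not_cyc l Dl); rewrite eli; by exists v.
Qed.

(* A partial conjugation acts on each factor by a conjugation or trivially. *)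
Lemma partial_conj_preserves phi : partial_conj H phi -> preserves S phi.
Proof.
move=> [aut [i [j [g [nij [Hg [conj_i fix_other]]]]]]].
have fix_g : phi g = g by apply: fix_other Hg => eji; apply: nij.
apply: aut_preserves => // h [l [Dl Hh]].
have Sh : S h by exists l.
have [eli | nli] := classic (l = i); last exact: fixed_in_closure (fix_other _ _ nli Hh).
subst l; split; first by rewrite conj_i //; have := ncl_conj (ginv g) (ncl_base Sh); rewrite ginvK.
exists (gmul g (gmul h (ginv g))); split; first exact: ncl_conj (ncl_base Sh).
rewrite !aut.1 homV; last exact: aut.1.
by rewrite fix_g conj_i // !gmulA gmulrV gmul1 -gmulA gmulrV gmulr1.
Qed.

Lemma Aut0_preserves :
  (forall i, D i -> ~ infinite_cyclic (H i)) ->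
  forall phi, Aut0 H phi -> preserves S phi.
Proof.
move=> not_cyc; apply: generated_preserves => phi [|[]].
- exact: factor_aut_preserves.
- exact: transvection_preserves.
- exact: partial_conj_preserves.
Qed.

End Aut0Invariance.

Section Words.
Variables (I : Type) (G : group) (H : I -> G -> Prop).
Hypothesis H_sub : forall i, subgroup (H i).

Lemma filter_letters_value (keep : pred I) w :
  letters_ok H w ->
  exists n, normal_closure (factors_in H (fun i => ~~ keep i : Prop)) n /\
            word_eval w = gmul n (word_eval [seq a <- w | keep a.1]).
Proof.
elim: w => [|[i x] w IH] /= => [_ | [[Hx _] /IH [n [Nn ->]]]].
  by exists gone; split; [exact: ncl_one | rewrite gmul1].
case: ifP => keep_i /=.
- exists (gmul x (gmul n (ginv x))); split; first exact: ncl_conj.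
  by rewrite -!gmulA (gmulA (ginv x)) gmulV gmul1.
- exists (gmul x n); split; last by rewrite gmulA.
  by apply: ncl_mul => //; apply: ncl_base; exists i; rewrite keep_i.
Qed.

Lemma filter_letters_ok (keep : pred I) w :
  letters_ok H w ->
  List.Forall (fun a => keep a.1 /\ H a.1 a.2) [seq a <- w | keep a.1].
Proof.
elim: w => [|[i x] w IH] /= => [_ | [[Hx _] /IH Fw]]; first exact: List.Forall_nil.
by case: ifP => keep_i //; apply: List.Forall_cons.
Qed.

Lemma alternating_tail (a : I * G) u : alternating (a :: u) -> alternating u.
Proof. by case: u => [|b u] //= []. Qed.

Lemma push_letter (P : I -> Prop) i x u :
  P i -> H i x -> reduced H u -> List.Forall (fun a => P a.1) u ->
  exists u', reduced H u' /\ List.Forall (fun a => P a.1) u' /\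
             word_eval u' = gmul x (word_eval u).
Proof.
move=> Pi Hx [ok_u alt_u] Pu.
have [-> | x1] := classic (x = gone).
  by exists u; rewrite gmul1.
case: u ok_u alt_u Pu => [|[j y] u] ok_u alt_u Pu.
  by exists [:: (i, x)]; do !split => //; exact: List.Forall_cons.
move: ok_u => /= [[Hy y1] ok_u].
have [eij | nij] := classic (i = j); last first.
  by exists [:: (i, x), (j, y) & u]; do !split => //; exact: List.Forall_cons.
subst j; have [xy1 | nxy1] := classic (gmul x y = gone).
  exists u; do !split => //; first exact: alternating_tail alt_u.
    by move: Pu => /List.Forall_cons_iff [].
  by rewrite /= gmulA xy1 gmul1.
exists ((i, gmul x y) :: u); do !split => //=.
- by have [_ [mulH _]] := H_sub i; exact: mulH.
- by move: Pu => /List.Forall_cons_iff [_ Pu]; exact: List.Forall_cons.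
- by rewrite gmulA.
Qed.

Lemma reduce_word (P : I -> Prop) t :
  List.Forall (fun a => P a.1 /\ H a.1 a.2) t ->
  exists u, reduced H u /\ List.Forall (fun a => P a.1) u /\
            word_eval u = word_eval t.
Proof.
elim: t => [|[i x] t IH] => [_ | /List.Forall_cons_iff /= [[Pi Hx] /IH]].
  by exists nil; do !split => //; exact: List.Forall_nil.
move=> [u [red_u [Pu Eu]]]; rewrite /= -Eu; exact: (push_letter Pi Hx red_u Pu).
Qed.

Lemma map_reduced (Q : group) (J : Type) (K : J -> Q -> Prop) (P : I -> Prop)
    (c : I -> J) (p : G -> Q) :
  hom p -> (forall i j, P i -> P j -> c i = c j -> i = j) ->
  (forall i x, P i -> H i x -> K (c i) (p x)) ->
  (forall i x, P i -> H i x -> p x = gone -> x = gone) ->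
  forall u, reduced H u -> List.Forall (fun a => P a.1) u ->
  let pu := [seq (c a.1, p a.2) | a <- u] in
  reduced K pu /\ word_eval pu = p (word_eval u).
Proof.
move=> hp c_inj pK p_inj; elim=> [|[i x] u IH] /=.
  by move=> _ _; rewrite hom1.
move=> [[[Hx x1] ok_u] alt_u] /List.Forall_cons_iff [Pi Pu].
have [[ok_pu alt_pu] ->] := IH (conj ok_u (alternating_tail alt_u)) Pu.
split; last by rewrite hp.
split; first by split; [split; [exact: pK | move/(p_inj _ _ Pi Hx)] |].
move: alt_u Pu alt_pu {IH ok_u ok_pu}; case: u => [|[j y] u] //= [nij _].
by move=> /List.Forall_cons_iff [Pj _] alt; split => // /(c_inj _ _ Pi Pj).
Qed.

End Words.

Lemma kernel_is_closure (I J : Type) (G Q : group) (H : I -> G -> Prop)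
    (K : J -> Q -> Prop) (keep : pred I) (c : I -> J) (p : G -> Q) :
  free_product H -> free_product K -> hom p ->
  (forall i x, ~~ keep i -> H i x -> p x = gone) ->
  (forall i j, keep i -> keep j -> c i = c j -> i = j) ->
  (forall i x, keep i -> H i x -> K (c i) (p x)) ->
  (forall i x, keep i -> H i x -> p x = gone -> x = gone) ->
  forall x, p x = gone <->
            normal_closure (factors_in H (fun i => ~~ keep i : Prop)) x.
Proof.
move=> [H_sub [_ [H_words _]]] [_ [_ [_ K_uniq]]] hp kill c_inj pK p_inj x.
split; last by apply: ncl_kernel => // h [i [drop_i Hh]]; exact: kill Hh.
have [w [[ok_w _] <-]] := H_words x Logic.I.
have [n [Nn ->]] := filter_letters_value keep ok_w.
have [u [red_u [keep_u <-]]] :=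
  reduce_word H_sub (P := keep) (filter_letters_ok keep ok_w).
have [red_pu val_pu] := map_reduced hp c_inj pK p_inj red_u keep_u.
have pn : p n = gone by apply: ncl_kernel Nn => // h [i [drop_i Hh]]; exact: kill Hh.
rewrite hp pn gmul1 -val_pu => pu1.
have := K_uniq _ nil red_pu (conj Logic.I Logic.I) pu1.
by case: u {red_u keep_u red_pu val_pu pu1} => // _; rewrite gmulr1.
Qed.

Definition factor_iso (k : nat) (G Q : group) (H : 'I_k -> G -> Prop)
    (p : G -> Q) (n : nat) (Qn : Q -> Prop) : Prop :=
  forall i : 'I_k, nat_of_ord i = n ->
    (forall x, H i x -> Qn (p x)) /\
    (forall x y, H i x -> H i y -> p x = p y -> x = y) /\
    (forall y, Qn y -> exists x, H i x /\ p x = y).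

Lemma low_index_inj (k : nat) (i j : 'I_k) :
  (i < 2)%N -> (j < 2)%N -> (i == 0 :> nat) = (j == 0 :> nat) -> i = j.
Proof.
move=> i2 j2 eij; apply: val_inj => /=; move: i2 j2 eij.
by case: (nat_of_ord i) => [|[|?]]; case: (nat_of_ord j) => [|[|?]].
Qed.

Lemma low_factors_embed (k : nat) (G Q : group) (H : 'I_k -> G -> Prop)
    (Q1 Q2 : Q -> Prop) (p : G -> Q) :
  (forall i, subgroup (H i)) -> hom p ->
  factor_iso H p 0 Q1 -> factor_iso H p 1 Q2 ->
  forall (i : 'I_k) x, (i < 2)%N -> H i x ->
    (if (i == 0 :> nat) then Q1 else Q2) (p x) /\ (p x = gone -> x = gone).
Proof.
move=> H_sub hp iso0 iso1 i x i2 Hx.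
have embed n Qn : factor_iso H p n Qn -> nat_of_ord i = n ->
    Qn (p x) /\ (p x = gone -> x = gone).
  move=> iso_n ein; have [into [inj _]] := iso_n i ein.
  split; first exact: into.
  by move=> px1; apply: inj => //; [case: (H_sub i) | rewrite px1 hom1].
case: eqP => [/(embed _ _ iso0) // | ni0]; apply: embed iso1 _.
by move: i2 ni0; case: (nat_of_ord i) => [|[|?]].
Qed.

Theorem lemma5p2 (k : nat) (G : group) (H : 'I_k -> G -> Prop)
  (Q : group) (Q1 Q2 : Q -> Prop) (p : G -> Q) :
  3 <= k ->
  free_product H ->
  (forall i, freely_indecomposable (H i)) ->
  (forall i : 'I_k, 2 <= i -> ~ infinite_cyclic (H i)) ->
  free_product (fun b : bool => if b then Q1 else Q2) ->
  hom p ->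
  (* p is an isomorphism from the first factor onto Q1 *)
  (forall i : 'I_k, nat_of_ord i = 0 ->
     (forall x, H i x -> Q1 (p x)) /\
     (forall x y, H i x -> H i y -> p x = p y -> x = y) /\
     (forall y, Q1 y -> exists x, H i x /\ p x = y)) ->
  (* p is an isomorphism from the second factor onto Q2 *)
  (forall i : 'I_k, nat_of_ord i = 1 ->
     (forall x, H i x -> Q2 (p x)) /\
     (forall x y, H i x -> H i y -> p x = p y -> x = y) /\
     (forall y, Q2 y -> exists x, H i x /\ p x = y)) ->
  (* p is trivial on the remaining factors *)
  (forall i : 'I_k, 2 <= i -> forall x, H i x -> p x = gone) ->
  forall phi, Aut0 H phi ->
  forall x, p x = gone <-> p (phi x) = gone.
Proof.
move=> _ fpH _ not_cyc fpQ hp iso0 iso1 kill phi aut0 x.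
pose keep (i : 'I_k) := (i < 2)%N.
have kill_dropped (i : 'I_k) y : ~~ keep i -> H i y -> p y = gone.
  by rewrite /keep -leqNgt => i2; exact: kill i2 y.
have embed := low_factors_embed fpH.1 hp iso0 iso1.
(* ker p is the normal closure of the factors H i, i >= 2 ... *)
have ker_p := kernel_is_closure (c := fun i : 'I_k => i == 0 :> nat)
  fpH fpQ hp kill_dropped (@low_index_inj k)
  (fun i y i2 Hy => (embed i y i2 Hy).1) (fun i y i2 Hy => (embed i y i2 Hy).2).
(* ... which Aut^0 preserves, none of these factors being infinite cyclic. *)
have dropped_not_cyclic (i : 'I_k) : ~~ keep i -> ~ infinite_cyclic (H i).
  by rewrite /keep -leqNgt; exact: not_cyc.
by rewrite !ker_p; exact: Aut0_preserves dropped_not_cyclic phi aut0 x.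
Qed.
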